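(* Under the Standing Setup and Assumption (G) described in the context, let $V_{n-k}\subseteq\mathbf{F}_2^n$ be the subspace spanned by the last $n-k$ standard basis vectors. Then $$\mathcal{E}(PC_{f,\mathcal{T}})=\frac{1}{2^{k2^{s-1}}}\sum_{\alpha\in\mathbf{F}_2^{k2^{s-1}}}\ \prod_{c=0}^{2^s-1}\mathcal{E}\big(f_{\chi(c,\alpha)+V_{n-k}}\big).$$
   Context: Standing Setup. $f:\mathbf{F}_2^n\to\mathbf{F}_2$ is a Boolean function. $\mathbf{x}_1,\ldots,\mathbf{x}_n$ are binary sequences, $\mathbf{x}_j=(x_j(t))_{t\ge0}$, with $\mathbf{x}_j$ periodic of period $T_j$, i.e. $x_j(t)=x_j(t \bmod T_j)$. Let $s\ge1$ and integers $0=\ell_1<\ell_2<\cdots<\ell_{s+1}=k\le n$; variable $j$ belongs to block $i$ if $\ell_i<j\le\ell_{i+1}$. For $1\le i\le s$, $M_i=q_i\,\mathrm{lcm}(T_{\ell_i+1},\ldots,T_{\ell_{i+1}})$ with $q_i$ a positive integer. For $c=\sum_{i=1}^s c_i2^{i-1}\in\{0,\ldots,2^s-1\}$ with $c_i\in\{0,1\}$, put $\tau_c=\sum_{i=1}^s c_iM_i$, and $\mathcal{T}=\{\tau_c\}$. The parity-check sequence is $PC_{f,\mathcal{T}}(t)=\bigoplus_{c=0}^{2^s-1} f\big(x_1(t+\tau_c),\ldots,x_n(t+\tau_c)\big)$. The bias of a Boolean function $h$ of $m$ variables is $\mathcal{E}(h)=2^{-m}\sum_{x\in\mathbf{F}_2^m}(-1)^{h(x)}$.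 The bias $\mathcal{E}(PC_{f,\mathcal{T}})$ is the bias of $PC_{f,\mathcal{T}}(t)$ (for a fixed $t\ge0$) viewed as a Boolean function of the $T_1+\cdots+T_n$ bits $x_j(0),\ldots,x_j(T_j-1)$, $1\le j\le n$; equivalently $\mathbb{E}[(-1)^{PC_{f,\mathcal{T}}(t)}]$ when these bits are independent and uniform. Assumption (G): (i) for every $j$ with $k<j\le n$, the $2^s$ integers $\tau_c$ are pairwise incongruent modulo $T_j$; (ii) for every $i\in\{1,\ldots,s\}$ and every $j$ in block $i$, the $2^{s-1}$ integers $\sum_{l\ne i}c_lM_l$ ($c_l\in\{0,1\}$) are pairwise incongruent modulo $T_j$. The map $\chi$: write $\alpha\in\mathbf{F}_2^{k2^{s-1}}$ as $\alpha=(\alpha_1,\ldots,\alpha_k)$ with $\alpha_j=(\alpha_{j,0},\ldots,\alpha_{j,2^{s-1}-1})\in\mathbf{F}_2^{2^{s-1}}$. For $0\le c<2^s$ define $\chi(c,\alpha)=(\chi_1(c,\alpha),\ldots,\chi_k(c,\alpha),0,\ldots,0)\in\mathbf{F}_2^n$ (last $n-k$ coordinates zero), where for $j$ in block $i$, $\chi_j(c,\alpha)=\alpha_{j,m}$ with $m$ the integer obtained from the binary expansion of $c$ by deleting the bit $c_i$ (the bit of weight $2^{i-1}$); explicitly, if $c=2^iq+c_i2^{i-1}+r$ with $0\le r<2^{i-1}$, then $m=2^{i-1}q+r$. (Thus $\chi_j(c,\alpha)=\chi_j(c-2^{i-1},\alpha)$ whenever $c_i=1$.) For $a\in V_k$ (the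 span of the first $k$ standard basis vectors), the restriction $f_{a+V_{n-k}}$ is the Boolean function $y\in V_{n-k}\mapsto f(a+y)$ of $n-k$ variables, so $\mathcal{E}(f_{a+V_{n-k}})=2^{-(n-k)}\sum_{y\in V_{n-k}}(-1)^{f(a+y)}$. *)

From HB Require Import structures.
From mathcomp Require Import all_boot all_order all_algebra.
Set Implicit Arguments. Unset Strict Implicit. Unset Printing Implicit Defensive.
Import Order.TTheory GRing.Theory Num.Theory.

(* Vectors of F_2^n, with F_2 = bool (addition = xor = addb). *)
Definition bvec (n : nat) := {ffun 'I_n -> bool}.

Definition bias (K : finType) (h : {ffun K -> bool} -> bool) : rat :=
  ((2 ^ #|K|)%:R)^-1 * \sum_(x : {ffun K -> bool}) (-1) ^+ h x.

(* Index set of the T_0 + ... + T_{n-1} bits x_j(0..T_j-1) (variables 0-based). *)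
Definition bitidx (n : nat) (T : nat -> nat) := {j : 'I_n & 'I_(T j)}.
Definition Bits (n : nat) (T : nat -> nat) := {ffun bitidx n T -> bool}.

(* x_j(t) = x_j(t mod T_j) for the periodic sequence determined by the bits X. *)
Definition xval (n : nat) (T : nat -> nat) (X : Bits n T) (j : 'I_n) (t : nat)
  : bool :=
  match (insub (t %% T j) : option 'I_(T j)) with
  | Some i => X (Tagged (fun j : 'I_n => 'I_(T j)) i)
  | None => false
  end.

Definition cbit (c i : nat) : bool := odd (c %/ 2 ^ i).

(* Blocks are 0-based: block i (0 <= i < s) consists of the 0-based variables
   j with l i <= j < l i.+1.  M_i = q_i * lcm of the periods in block i. *)
Definition Mblk (T q l : nat -> nat) (i : nat) : nat :=
  q i * \big[lcmn/1]_(l i <= j < l i.+1) T j.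

Definition tau (s : nat) (M : nat -> nat) (c : nat) : nat :=
  \sum_(i < s) cbit c i * M i.

Definition PC (n s : nat) (T : nat -> nat) (M : nat -> nat)
  (f : bvec n -> bool) (t : nat) (X : Bits n T) : bool :=
  \big[addb/false]_(c < 2 ^ s) f [ffun j : 'I_n => xval X j (t + tau s M c)].

(* delete bit i (weight 2^i) from c: c = 2^{i+1} q + c_i 2^i + r  |->  2^i q + r *)
Definition delbit (i c : nat) : nat := 2 ^ i * (c %/ 2 ^ i.+1) + c %% 2 ^ i.

Definition alpha_at (k s : nat) (alpha : {ffun 'I_k * 'I_(2 ^ (s - 1)) -> bool})
  (j m : nat) : bool :=
  match (insub j : option 'I_k), (insub m : option 'I_(2 ^ (s - 1))) with
  | Some j', Some m' => alpha (j', m')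
  | _, _ => false
  end.

Definition chi (n k s : nat) (l : nat -> nat)
  (alpha : {ffun 'I_k * 'I_(2 ^ (s - 1)) -> bool}) (c : nat) : bvec n :=
  [ffun j : 'I_n => [exists i : 'I_s,
      (l i <= j < l i.+1) && alpha_at alpha j (delbit i c)]].

Definition Vlast (n k : nat) (y : bvec n) : bool := [forall j : 'I_n, (j < k) ==> ~~ y j].

Definition restr_bias (n k : nat) (f : bvec n -> bool) (a : bvec n) : rat :=
  ((2 ^ (n - k))%:R)^-1 *
  \sum_(y : bvec n | Vlast k y) (-1) ^+ f [ffun j => addb (a j) (y j)].

From HB Require Import structures.
From mathcomp Require Import all_boot all_order all_algebra.
Import Order.TTheory GRing.Theory Num.Theory.

Set Implicit Arguments.
Unset Strict Implicit.
Unset Printing Implicit Defensive.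

(* At time t + tau_c, a variable j of block i is read at a position that only
   depends on c with bit i deleted: tau_c = tau_{c'} + c_i M_i where c' is c
   with bit i cleared, and T_j divides M_i.  A variable j >= k outside the
   blocks is read at t + tau_c.  Assumption (G) says exactly that all these
   positions are pairwise distinct, i.e. PC(t) only reads its input X through
   an injective map  bitpos : Free -> bits,  where Free indexes the pairs
   (j, m) with j < k, m < 2^{s-1} (giving alpha) and the pairs (c, r) with
   c < 2^s, r < n - k (giving a tail vector w_c for each c).  A function of
   injectively selected uniform bits has the same bias as a function of its
   own bits, so E(PC) is the bias of  xor_c f(chi(c, alpha) + w_c)  over
   independent alpha and w_c.  Splitting the sum over Free into alpha and
   the w_c, and expanding the product of the restricted biases
   E(f_{chi(c, alpha) + V_{n-k}}) as a sum over the w_c, gives the formula. *)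

(* Summing over X a quantity that depends only on X o pi, for pi injective,
   counts each value Z of X o pi once per free choice of X off the image of pi. *)
Lemma sum_ffun_comp_inj (K L V : finType) (R : nmodType) (pi : L -> K)
    (G : {ffun L -> V} -> R) : injective pi ->
  (\sum_(X : {ffun K -> V}) G [ffun x => X (pi x)] =
   \sum_(Z : {ffun L -> V}) G Z *+ #|V| ^ (#|K| - #|L|))%R.
Proof.
move=> pi_inj.
rewrite (partition_big (fun X : {ffun K -> V} => [ffun x => X (pi x)]) predT) //=.
apply: eq_bigr => Z _.
rewrite (eq_bigr (fun _ => G Z)); last by move=> X; rewrite ?andTb => /eqP ->.
rewrite sumr_const; congr (_ *+ _)%R.
pose F x := if [pick y | pi y == x] is Some y then pred1 (Z y) else predT.
have -> : #|[pred X : {ffun K -> V} | [ffun x => X (pi x)] == Z]| = #|family F|.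
  apply: eq_card => X; rewrite inE; apply/eqP/familyP => [XZ x | XF].
    by rewrite /F; case: pickP => [y /eqP <- | _]; rewrite ?inE // -XZ ffunE.
  apply/ffunP => y; rewrite ffunE; have := XF (pi y); rewrite /F.
  by case: pickP => [y' /eqP /pi_inj -> /eqP // | /(_ y)]; rewrite eqxx.
rewrite card_family foldrE big_map big_enum /= (bigID (mem (codom pi))) /=.
rewrite big1 ?mul1n => [|x /codomP[y ->]]; last first.
  by rewrite /F; case: pickP => [y' _ | /(_ y)]; rewrite ?card1 ?eqxx.
rewrite (eq_bigr (fun _ => #|V|)) => [|x pi'x]; last first.
  by rewrite /F; case: pickP => // y /eqP yx; case/negP: pi'x; rewrite -yx codom_f.
rewrite prod_nat_const -(cardC (mem (codom pi))) card_codom // addKn.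
by congr (_ ^ _); apply: eq_card => x; rewrite !inE.
Qed.

Lemma eq_bias (K : finType) (h1 h2 : {ffun K -> bool} -> bool) :
  h1 =1 h2 -> bias h1 = bias h2.
Proof. by move=> eq_h; rewrite /bias; under eq_bigr do rewrite eq_h. Qed.

Lemma bias_comp_inj (K L : finType) (pi : L -> K) (G : {ffun L -> bool} -> bool) :
  injective pi -> bias (fun X : {ffun K -> bool} => G [ffun x => X (pi x)]) = bias G.
Proof.
move=> pi_inj; rewrite /bias (sum_ffun_comp_inj (fun Z => (-1) ^+ G Z)%R pi_inj).
rewrite sumrMnl card_bool mulrnAr -mulr_natl mulrA; congr (_ * _)%R.
have le_LK : #|L| <= #|K| := leq_card pi pi_inj.
rewrite -{2}(subnK le_LK) expnD natrM invfM mulrA mulfV ?mul1r //.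
by rewrite pnatr_eq0 expn_eq0.
Qed.

Lemma sign_xor (R : pzRingType) (I : Type) (r : seq I) (P : pred I) (b : I -> bool) :
  ((-1) ^+ (\big[addb/false]_(i <- r | P i) b i) = \prod_(i <- r | P i) (-1) ^+ b i :> R)%R.
Proof. by apply: (big_morph _ (@signr_addb R)); rewrite expr0. Qed.

Lemma sum_ffun_sum (A B V : finType) (R : nmodType)
    (F : {ffun A -> V} -> {ffun B -> V} -> R) :
  (\sum_(Z : {ffun A + B -> V}) F [ffun a => Z (inl a)] [ffun b => Z (inr b)] =
   \sum_(Za : {ffun A -> V}) \sum_(Zb : {ffun B -> V}) F Za Zb)%R.
Proof.
rewrite pair_big /= (reindex (fun Z : {ffun A + B -> V} =>
  ([ffun a => Z (inl a)], [ffun b => Z (inr b)]))) //.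
exists (fun p : {ffun A -> V} * {ffun B -> V} =>
  [ffun x : A + B => match x return V with inl a => p.1 a | inr b => p.2 b end]).
  by move=> Z _; apply/ffunP => [[a|b]]; rewrite !ffunE.
by move=> [Za Zb] _; congr (_, _); apply/ffunP => x; rewrite !ffunE.
Qed.

Lemma sum_ffun_curry (B C V : finType) (R : nmodType) (F : {ffun B -> {ffun C -> V}} -> R) :
  (\sum_(Y : {ffun B * C -> V}) F [ffun b => [ffun c => Y (b, c)]] = \sum_W F W)%R.
Proof.
rewrite (reindex (fun W : {ffun B -> {ffun C -> V}} => [ffun p => W p.1 p.2])) /=.
  by apply: eq_bigr => W _; congr F; apply/ffunP => b; apply/ffunP => c; rewrite !ffunE.
exists (fun Y : {ffun B * C -> V} => [ffun b => [ffun c => Y (b, c)]]) => [W _|Y _].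
  by apply/ffunP => b; apply/ffunP => c; rewrite !ffunE.
by apply/ffunP => [[b c]]; rewrite !ffunE.
Qed.

Lemma cbit_div (c i j : nat) : cbit (c %/ 2 ^ i) j = cbit c (i + j).
Proof. by rewrite /cbit -divnMA -expnD. Qed.

Lemma cbit_split (i a b j : nat) : b < 2 ^ i ->
  cbit (2 ^ i * a + b) j = if j < i then cbit b j else cbit a (j - i).
Proof.
move=> b_lt; case: ltnP => [lt_ji | le_ij].
  have split_i : 2 ^ i = 2 ^ (i - j) * 2 ^ j by rewrite -expnD subnK // ltnW.
  rewrite split_i mulnAC /cbit divnMDl ?expn_gt0 // oddD oddM oddX.
  by rewrite subn_eq0 leqNgt lt_ji.
rewrite -{1}(subnKC le_ij) -cbit_div mulnC divnMDl ?expn_gt0 //.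
by rewrite divn_small ?addn0.
Qed.

Lemma cbit_mod (c i j : nat) : j < i -> cbit (c %% 2 ^ i) j = cbit c j.
Proof.
move=> lt_ji; rewrite [in RHS](divn_eq c (2 ^ i)) mulnC.
by rewrite cbit_split ?ltn_pmod ?expn_gt0 // lt_ji.
Qed.

Lemma div_pack (i a b : nat) : b < 2 ^ i -> (2 ^ i * a + b) %/ 2 ^ i = a.
Proof. by move=> b_lt; rewrite mulnC divnMDl ?expn_gt0 // divn_small ?addn0. Qed.

Lemma mod_pack (i a b : nat) : b < 2 ^ i -> (2 ^ i * a + b) %% 2 ^ i = b.
Proof. by move=> b_lt; rewrite mulnC modnMDl modn_small. Qed.

Lemma lt_pack (i p a b : nat) : b < 2 ^ i -> a < 2 ^ p -> 2 ^ i * a + b < 2 ^ (i + p).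
Proof.
move=> b_lt a_lt; rewrite expnD (@leq_trans (2 ^ i * a.+1)) //.
  by rewrite mulnS addnC ltn_add2r.
by rewrite leq_mul2l a_lt orbT.
Qed.

(* Insert a 0 bit at position i: inverse of delbit on numbers with bit i clear. *)
Definition insbit (i m : nat) : nat := 2 ^ i * (2 * (m %/ 2 ^ i)) + m %% 2 ^ i.

Lemma delbit_insbit (i m : nat) : delbit i (insbit i m) = m.
Proof.
have m_lt : m %% 2 ^ i < 2 ^ i by rewrite ltn_pmod ?expn_gt0.
rewrite /delbit /insbit expnSr divnMA div_pack // mulKn // mod_pack //.
by rewrite mulnC -divn_eq.
Qed.

Lemma cbit_insbit_delbit (i c j : nat) :
  cbit (insbit i (delbit i c)) j = (j != i) && cbit c j.
Proof.
have c_lt : c %% 2 ^ i < 2 ^ i by rewrite ltn_pmod ?expn_gt0.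
rewrite /insbit /delbit div_pack // mod_pack // cbit_split //.
case: ltngtP => [lt_ji | lt_ij | ->]; rewrite ?cbit_mod //.
- rewrite -(subnSK lt_ij) /cbit [2 ^ (j - i.+1).+1]expnS divnMA mulKn //.
  by rewrite -divnMA -expnD subnKC.
- by rewrite subnn /cbit divn1 oddM.
Qed.

Lemma cbit_insbit (i m : nat) : cbit (insbit i m) i = false.
Proof. by rewrite -{1}(delbit_insbit i m) cbit_insbit_delbit eqxx. Qed.

Lemma delbit_lt (s i c : nat) : i < s -> c < 2 ^ s -> delbit i c < 2 ^ (s - 1).
Proof.
case: s => // s lt_is c_lt; rewrite subn1 /=.
have r_lt : c %% 2 ^ i < 2 ^ i by rewrite ltn_pmod ?expn_gt0.
have q_lt : c %/ 2 ^ i.+1 < 2 ^ (s - i).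
  by rewrite ltn_divLR ?expn_gt0 // -expnD addnS subnK.
by have := lt_pack r_lt q_lt; rewrite subnKC.
Qed.

Lemma insbit_lt (s i m : nat) : i < s -> m < 2 ^ (s - 1) -> insbit i m < 2 ^ s.
Proof.
case: s => // s lt_is; rewrite subn1 /= => m_lt.
have r_lt : m %% 2 ^ i < 2 ^ i by rewrite ltn_pmod ?expn_gt0.
have q_lt : 2 * (m %/ 2 ^ i) < 2 ^ (s - i).+1.
  by rewrite expnS ltn_pmul2l // ltn_divLR ?expn_gt0 // -expnD subnK.
by have := lt_pack r_lt q_lt; rewrite addnS subnKC.
Qed.

Lemma tau_delbit (s : nat) (M : nat -> nat) (i c : nat) : i < s ->
  tau s M c = tau s M (insbit i (delbit i c)) + cbit c i * M i.
Proof.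
move=> lt_is; rewrite /tau (bigD1 (Ordinal lt_is)) // [in RHS](bigD1 (Ordinal lt_is)) //=.
rewrite cbit_insbit_delbit eqxx add0n addnC; congr (_ + _); apply: eq_bigr => j ne_ji.
by rewrite cbit_insbit_delbit (ne_ji : (j : nat) != i).
Qed.

Section Blocks.
Variables (s : nat) (l : nat -> nat).
Hypotheses (l0 : l 0 = 0) (l_incr : forall i, i < s -> l i < l i.+1).

Lemma l_mono (a b : nat) : a <= b <= s -> l a <= l b.
Proof.
case/andP=> + le_bs; elim: b le_bs => [|b IHb] lt_bs; first by rewrite leqn0 => /eqP ->.
rewrite leq_eqVlt ltnS => /orP[/eqP -> // | le_ab].
exact: leq_trans (IHb (ltnW lt_bs) le_ab) (ltnW (l_incr lt_bs)).
Qed.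

Lemma block_uniq (i1 i2 j : nat) : i1 < s -> i2 < s ->
  l i1 <= j < l i1.+1 -> l i2 <= j < l i2.+1 -> i1 = i2.
Proof.
move=> lt1 lt2 /andP[ge1 lt1j] /andP[ge2 lt2j].
case: (ltngtP i1 i2) => // [lt12 | lt21].
  have := @l_mono i1.+1 i2; rewrite lt12 (ltnW lt2) => /(_ isT) /(leq_trans lt1j).
  by rewrite ltnNge ge2.
have := @l_mono i2.+1 i1; rewrite lt21 (ltnW lt1) => /(_ isT) /(leq_trans lt2j).
by rewrite ltnNge ge1.
Qed.

Lemma block_exists (j : nat) : j < l s -> exists2 i, i < s & l i <= j < l i.+1.
Proof.
suff below b : b <= s -> j < l b -> exists2 i, i < b & l i <= j < l i.+1.
  by move=> /(below s (leqnn s)) [i lt_is ij]; exists i.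
elim: b => [|b IHb] le_bs; first by rewrite l0.
case: (ltnP j (l b)) => [lt_jb _ | ge_jb lt_jb].
  by have [i lt_ib ij] := IHb (ltnW le_bs) lt_jb; exists i => //; exact: ltnW.
by exists b => //; rewrite ge_jb.
Qed.

Lemma not_in_block (i j : nat) : i < s -> l s <= j -> ~~ (l i <= j < l i.+1).
Proof.
move=> lt_is ge_js; have := @l_mono i.+1 s; rewrite lt_is leqnn => /(_ isT) le_is.
by rewrite negb_and -leqNgt (leq_trans le_is ge_js) orbT.
Qed.

Definition blk (j : nat) : nat :=
  if [pick i : 'I_s | l i <= j < l i.+1] is Some i then val i else 0.

Lemma blkE (i j : nat) : i < s -> l i <= j < l i.+1 -> blk j = i.
Proof.
move=> lt_is ij; rewrite /blk; case: pickP => [i' i'j | /(_ (Ordinal lt_is))].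
  exact: block_uniq (ltn_ord i') lt_is i'j ij.
by rewrite ij.
Qed.

Lemma chi_in_block (n k : nat) (alpha : {ffun 'I_k * 'I_(2 ^ (s - 1)) -> bool})
    (c : nat) (j : 'I_n) (i : nat) :
  i < s -> l i <= j < l i.+1 -> @chi n k s l alpha c j = alpha_at alpha j (delbit i c).
Proof.
move=> lt_is ij; rewrite ffunE; apply/existsP/idP => [[i' /andP[i'j]] | alpha_j].
  by rewrite (block_uniq (ltn_ord i') lt_is i'j ij).
by exists (Ordinal lt_is); rewrite ij.
Qed.

Lemma chi_out_blocks (n k : nat) (alpha : {ffun 'I_k * 'I_(2 ^ (s - 1)) -> bool})
    (c : nat) (j : 'I_n) : l s <= j -> @chi n k s l alpha c j = false.
Proof.
move=> ge_js; rewrite ffunE; apply/existsP => [[i /andP[ij _]]].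
by move: ij; rewrite (negbTE (not_in_block (ltn_ord i) ge_js)).
Qed.
End Blocks.

Lemma alpha_atE (k s : nat) (alpha : {ffun 'I_k * 'I_(2 ^ (s - 1)) -> bool})
    (j m : nat) (lt_jk : j < k) (lt_m : m < 2 ^ (s - 1)) :
  alpha_at alpha j m = alpha (Ordinal lt_jk, Ordinal lt_m).
Proof.
rewrite /alpha_at; case: insubP => [j' _ j'E | ]; last by rewrite lt_jk.
case: insubP => [m' _ m'E | ]; last by rewrite lt_m.
by congr (alpha (_, _)); apply: val_inj.
Qed.

(* Each period T_j of block i divides M_i, so shifting by M_i leaves block i unchanged. *)
Lemma Mblk_dvd (T q l : nat -> nat) (i j : nat) : l i <= j < l i.+1 -> T j %| Mblk T q l i.
Proof.
case/andP=> ge_ij lt_ji; rewrite /Mblk dvdn_mull //.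
rewrite (big_cat_nat ge_ij (ltnW lt_ji)) /= [X in lcmn _ X]big_ltn //.
exact: dvdn_trans (dvdn_lcml (T j) _) (dvdn_lcmr _ _).
Qed.

Section Tail.
Variables n k : nat.

Lemma tail_ord_lt (r : 'I_(n - k)) : k + r < n.
Proof. by rewrite -ltn_subRL. Qed.

Definition tail_ord (r : 'I_(n - k)) : 'I_n := Ordinal (tail_ord_lt r).

Definition ext (w : {ffun 'I_(n - k) -> bool}) : bvec n :=
  [ffun j => [exists r, (j == tail_ord r) && w r]].

Lemma ext_tail (w : {ffun 'I_(n - k) -> bool}) (r : 'I_(n - k)) : ext w (tail_ord r) = w r.
Proof.
rewrite ffunE; apply/existsP/idP => [[r' /andP[/eqP eq_r w_r']] | w_r].
  suff -> : r = r' by [].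
  by apply: val_inj; apply/eqP; rewrite -(eqn_add2l k); apply/eqP/(congr1 val eq_r).
by exists r; rewrite eqxx.
Qed.

Lemma ext_head (w : {ffun 'I_(n - k) -> bool}) (j : 'I_n) : j < k -> ext w j = false.
Proof.
move=> lt_jk; rewrite ffunE; apply/existsP => [[r /andP[/eqP eq_j _]]].
by move: lt_jk; rewrite eq_j /= ltnNge leq_addr.
Qed.

Lemma tail_ordE (j : 'I_n) : k <= j -> exists r, j = tail_ord r.
Proof.
move=> ge_jk; have r_lt : j - k < n - k by rewrite ltn_sub2r // (leq_ltn_trans ge_jk).
by exists (Ordinal r_lt); apply: val_inj; rewrite /= subnKC.
Qed.

Lemma restr_biasE (f : bvec n -> bool) (a : bvec n) : restr_bias k f a =
  (((2 ^ (n - k))%:R)^-1 *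
   \sum_(w : {ffun 'I_(n - k) -> bool}) (-1) ^+ f [ffun j => a j (+) ext w j])%R.
Proof.
rewrite /restr_bias; congr (_ * _)%R.
rewrite (reindex_onto ext (fun y : bvec n => [ffun r => y (tail_ord r)])) /=.
  apply: eq_bigl => w; have -> : Vlast k (ext w).
    by apply/forallP => j; apply/implyP => /ext_head ->.
  by apply/eqP/ffunP => r; rewrite ffunE ext_tail.
move=> y /forallP y_head; apply/ffunP => j; case: (ltnP j k) => [lt_jk | ge_jk].
  by rewrite ext_head //; move/implyP: (y_head j) => /(_ lt_jk) /negbTE.
by have [r ->] := tail_ordE ge_jk; rewrite ext_tail ffunE.
Qed.
End Tail.

Section FreeBits.
Variables (n k s : nat) (f : bvec n -> bool) (l : nat -> nat).

Definition Free := (('I_k * 'I_(2 ^ (s - 1))) + ('I_(2 ^ s) * 'I_(n - k)))%type.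

Definition pc_free (alpha : {ffun 'I_k * 'I_(2 ^ (s - 1)) -> bool})
    (W : {ffun 'I_(2 ^ s) -> {ffun 'I_(n - k) -> bool}}) : bool :=
  \big[addb/false]_(c < 2 ^ s) f [ffun j => @chi n k s l alpha c j (+) ext (W c) j].

(* Theorem 2 for the free parity check: the sum over Free splits into alpha
   and W, and the product over c of the restricted biases expands as the sum
   over W of the product of signs. *)
Lemma bias_pc_free :
  bias (fun Z : {ffun Free -> bool} =>
          pc_free [ffun p => Z (inl p)] [ffun c => [ffun r => Z (inr (c, r))]]) =
  (((2 ^ (k * 2 ^ (s - 1)))%:R)^-1 *
   \sum_(alpha : {ffun 'I_k * 'I_(2 ^ (s - 1)) -> bool})
      \prod_(c < 2 ^ s) restr_bias k f (@chi n k s l alpha c))%R.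
Proof.
pose sgn alpha c (w : {ffun 'I_(n - k) -> bool}) :=
  ((-1) ^+ f [ffun j => @chi n k s l alpha c j (+) ext w j] : rat)%R.
have split_free : (\sum_(Z : {ffun Free -> bool})
    (-1) ^+ pc_free [ffun p => Z (inl p)] [ffun c => [ffun r => Z (inr (c, r))]] =
    \sum_alpha \sum_W (-1) ^+ pc_free alpha W :> rat)%R.
  under [in RHS]eq_bigr => alpha _ do
    rewrite -(sum_ffun_curry (fun W => (-1) ^+ pc_free alpha W : rat)%R).
  rewrite -(sum_ffun_sum (fun alpha Y =>
    (-1) ^+ pc_free alpha [ffun c => [ffun r => Y (c, r)]] : rat)%R).
  apply: eq_bigr => Z _; congr (_ ^+ pc_free _ _)%R.
  by apply/ffunP => c; apply/ffunP => r; rewrite !ffunE.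
have prod_restr alpha : (\prod_(c < 2 ^ s) restr_bias k f (@chi n k s l alpha c) =
    ((2 ^ (n - k))%:R^-1) ^+ (2 ^ s)%N *
    \sum_(W : {ffun 'I_(2 ^ s) -> {ffun 'I_(n - k) -> bool}})
       \prod_(c < 2 ^ s) sgn alpha c (W c))%R.
  under eq_bigr do rewrite restr_biasE.
  by rewrite big_split /= prodr_const card_ord bigA_distr_bigA.
rewrite /bias split_free; under [in RHS]eq_bigr do rewrite prod_restr.
rewrite -big_distrr mulrA; congr (_ * _)%R.
  rewrite card_sum !card_prod !card_ord expnD natrM invfM exprVn -natrX -expnM.
  by rewrite (mulnC (2 ^ s)).
by apply: eq_bigr => alpha _; apply: eq_bigr => W _; rewrite sign_xor.
Qed.
End FreeBits.

Section ParityCheck.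
Variables (n k s : nat) (f : bvec n -> bool) (T q l : nat -> nat) (t : nat).
Hypotheses (HT : forall j, j < n -> 0 < T j)
  (Hl0 : l 0 = 0)
  (Hlinc : forall i, i < s -> l i < l i.+1)
  (Hls : l s = k)
  (Hkn : k <= n)
  (G1 : forall j, k <= j < n -> forall c1 c2, c1 < 2 ^ s -> c2 < 2 ^ s ->
          tau s (Mblk T q l) c1 = tau s (Mblk T q l) c2 %[mod T j] -> c1 = c2)
  (G2 : forall i, i < s -> forall j, l i <= j < l i.+1 ->
          forall c1 c2, c1 < 2 ^ s -> c2 < 2 ^ s -> ~~ cbit c1 i -> ~~ cbit c2 i ->
          tau s (Mblk T q l) c1 = tau s (Mblk T q l) c2 %[mod T j] -> c1 = c2).

Local Notation tauM := (tau s (Mblk T q l)).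

Definition pos (j : 'I_n) (u : nat) : 'I_(T j) := Ordinal (ltn_pmod u (HT (ltn_ord j))).

Lemma xvalE (X : Bits n T) (j : 'I_n) (u : nat) :
  xval X j u = X (Tagged (fun j : 'I_n => 'I_(T j)) (pos j u)).
Proof.
rewrite /xval; case: insubP => [i _ iE | ]; last by rewrite ltn_pmod // HT.
by congr (X (Tagged _ _)); apply: val_inj.
Qed.

(* The position read for each free bit: alpha_{j,m} is x_j at time
   t + tau(insbit (blk j) m), and (W c)_r is x_{k+r} at time t + tau_c. *)
Definition bitpos (x : Free n k s) : bitidx n T :=
  match x with
  | inl (j, m) => Tagged (fun j : 'I_n => 'I_(T j))
                    (pos (widen_ord Hkn j) (t + tauM (insbit (blk s l j) m)))
  | inr (c, r) => Tagged (fun j : 'I_n => 'I_(T j)) (pos (tail_ord r) (t + tauM c))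
  end.

(* Assumption (G): distinct free bits are read at distinct positions. *)
Lemma bitpos_inj : injective bitpos.
Proof.
move=> [[j1 m1]|[c1 r1]] [[j2 m2]|[c2 r2]]
  /(congr1 (fun x : bitidx n T => (val (tag x), val (tagged x)))) /= [].
- move=> /val_inj eq_j; subst j2 => eq_pos.
  have lt_js : j1 < l s by rewrite Hls.
  have [i lt_is ij] := block_exists Hl0 lt_js.
  move: eq_pos; rewrite (blkE Hlinc lt_is ij) => eq_pos.
  have eq_ins : insbit i m1 = insbit i m2.
    apply: (G2 lt_is ij); rewrite ?insbit_lt ?cbit_insbit //.
    by apply/eqP; rewrite -(eqn_modDl t); apply/eqP.
  by congr (inl (_, _)); apply: val_inj; rewrite /= -(delbit_insbit i m1) eq_ins delbit_insbit.
- by move=> eq_j; have := ltn_ord j1; rewrite eq_j ltnNge leq_addr.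
- by move=> eq_j; have := ltn_ord j2; rewrite -eq_j ltnNge leq_addr.
- move=> /addnI /val_inj eq_r; subst r2 => eq_pos.
  have eq_c : (c1 : nat) = c2.
    have tail_range : k <= k + r1 < n by rewrite leq_addr tail_ord_lt.
    apply: (G1 tail_range) => //.
    by apply/eqP; rewrite -(eqn_modDl t); apply/eqP.
  by congr (inr (_, _)); apply: val_inj.
Qed.

Lemma shifted_inputE (X : Bits n T) (c : 'I_(2 ^ s)) :
  let Z := [ffun x => X (bitpos x)] in
  [ffun j => xval X j (t + tauM c)] =
  [ffun j => @chi n k s l [ffun p => Z (inl p)] c j (+)
             ext [ffun r => Z (inr (c, r))] j].
Proof.
move=> Z; apply/ffunP => j; rewrite [LHS]ffunE [RHS]ffunE xvalE.
case: (ltnP j k) => [lt_jk | ge_jk].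
- have lt_js : j < l s by rewrite Hls.
  have [i lt_is ij] := block_exists Hl0 lt_js.
  rewrite ext_head // addbF (chi_in_block Hlinc _ _ lt_is ij).
  rewrite (alpha_atE _ lt_jk (delbit_lt lt_is (ltn_ord c))) !ffunE /=.
  have -> : widen_ord Hkn (Ordinal lt_jk) = j by apply: val_inj.
  congr (X (Tagged _ _)); apply: val_inj => /=.
  rewrite (blkE Hlinc lt_is ij) [in LHS](tau_delbit _ c lt_is).
  have [z ->] := dvdnP (Mblk_dvd T q ij).
  by rewrite addnA mulnA addnC modnMDl.
- have ge_js : l s <= j by rewrite Hls.
  rewrite (chi_out_blocks Hlinc _ _ ge_js).
  by have [r ->] := tail_ordE ge_jk; rewrite ext_tail !ffunE.
Qed.

(* PC reads its input only through the injective bitpos, so it has the bias of pc_free. *)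
Lemma bias_PC_free : bias (@PC n s T (Mblk T q l) f t) =
  bias (fun Z : {ffun Free n k s -> bool} =>
          pc_free f l [ffun p => Z (inl p)] [ffun c => [ffun r => Z (inr (c, r))]]).
Proof.
rewrite -(bias_comp_inj _ bitpos_inj); apply: eq_bias => X.
apply: eq_bigr => c _; rewrite shifted_inputE; congr f.
by apply/ffunP => j; rewrite !ffunE.
Qed.
End ParityCheck.

Theorem theorem2 (n k s : nat) (f : bvec n -> bool) (T q l : nat -> nat)
  (HT : forall j, j < n -> 0 < T j)
  (Hs : 0 < s)
  (Hl0 : l 0 = 0)
  (Hlinc : forall i, i < s -> l i < l i.+1)
  (Hls : l s = k)
  (Hkn : k <= n)
  (Hq : forall i, i < s -> 0 < q i)
  (G1 : forall j, k <= j < n -> forall c1 c2, c1 < 2 ^ s -> c2 < 2 ^ s ->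
          tau s (Mblk T q l) c1 = tau s (Mblk T q l) c2 %[mod T j] -> c1 = c2)
  (G2 : forall i, i < s -> forall j, l i <= j < l i.+1 ->
          forall c1 c2, c1 < 2 ^ s -> c2 < 2 ^ s -> ~~ cbit c1 i -> ~~ cbit c2 i ->
          tau s (Mblk T q l) c1 = tau s (Mblk T q l) c2 %[mod T j] -> c1 = c2)
  (t : nat) :
  bias (@PC n s T (Mblk T q l) f t) =
  (((2 ^ (k * 2 ^ (s - 1)))%:R)^-1 *
  \sum_(alpha : {ffun 'I_k * 'I_(2 ^ (s - 1)) -> bool})
     \prod_(c < 2 ^ s) restr_bias k f (@chi n k s l alpha c))%R.
Proof.
rewrite (bias_PC_free f t HT Hl0 Hlinc Hls Hkn G1 G2).
exact: bias_pc_free.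
Qed.
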